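(* Let $f:\mathbb{R}^d\to\mathbb{R}$ be twice differentiable with $\inf f>-\infty$, and suppose there are constants $L,M>0$ with $\|\nabla f(x)-\nabla f(y)\|\le L\|x-y\|$ and $\|\nabla^2 f(x)-\nabla^2 f(y)\|_{\mathrm{op}}\le M\|x-y\|$ for all $x,y$. Let $x_k\in\mathbb{R}^d$, $s_k\in\mathbb{R}^d$, $x_{k+1}:=x_k+s_k$, $\theta\in(0,1)$, and $B_k,X\in\mathbb{S}^d$, and define $$B_{k+1}:=\frac{1-\theta}{1+\theta}(B_k+X).$$ Then $$\gamma_{k+1}-\gamma_k\le 2dL^2\theta+\frac{dM^2}{2\theta}\|s_k\|^2+\|X\|_F^2-2\langle X,G_k-B_k\rangle.$$
   Context: $\mathbb{S}^d$ is the set of real symmetric $d\times d$ matrices with inner product $\langle A,B\rangle=\mathrm{tr}(A^\top B)$; $\|\cdot\|_F$ is the Frobenius norm and $\|\cdot\|_{\mathrm{op}}$ the spectral norm. For $j\in\{k,k+1\}$, $$\gamma_j:=\|B_j-\nabla^2 f(x_j)\|_F^2-\|\nabla^2 f(x_j)\|_F^2+\frac{\theta}{1-\theta}\|B_j\|_F^2,$$ and $G_k:=\int_0^1\nabla^2 f(x_k+\tau s_k)\,d\tau$. *)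

From HB Require Import structures.
From mathcomp Require Import all_boot all_order all_algebra.
From mathcomp Require Import all_classical all_reals all_analysis.
Set Implicit Arguments. Unset Strict Implicit. Unset Printing Implicit Defensive.
Import Order.TTheory GRing.Theory Num.Theory.
Import numFieldNormedType.Exports.
Local Open Scope classical_set_scope.
Local Open Scope ring_scope.

Section Defs.
Variables (R : realType) (d : nat).

Definition enorm (v : 'cV[R]_d) : R := Num.sqrt (\sum_(i < d) v i 0 ^+ 2).

Definition frob (A : 'M[R]_d) : R :=
  Num.sqrt (\sum_(i < d) \sum_(j < d) A i j ^+ 2).

Definition inner (A B : 'M[R]_d) : R := \tr (A^T *m B).

Definition opnorm (A : 'M[R]_d) : R :=
  sup [set r | exists v : 'cV[R]_d, enorm v <= 1 /\ r = enorm (A *m v)].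

Definition grad (f : 'cV[R]_d -> R) (x : 'cV[R]_d) : 'cV[R]_d :=
  \col_i ('d f x (delta_mx i 0 : 'cV[R]_d)).

Definition hess (f : 'cV[R]_d -> R) (x : 'cV[R]_d) : 'M[R]_d :=
  \matrix_(i, j) ('d (grad f) x (delta_mx j 0 : 'cV[R]_d) i 0).

Definition Gk (f : 'cV[R]_d -> R) (x s : 'cV[R]_d) : 'M[R]_d :=
  \matrix_(i, j) Rintegral (@lebesgue_measure R) `[0%R, 1%R]
                   (fun t : R => hess f (x + t *: s) i j).

Definition gamma (f : 'cV[R]_d -> R) (theta : R) (x : 'cV[R]_d) (B : 'M[R]_d) : R :=
  frob (B - hess f x) ^+ 2 - frob (hess f x) ^+ 2
  + theta / (1 - theta) * frob B ^+ 2.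

End Defs.

From HB Require Import structures.
From mathcomp Require Import all_boot all_order all_algebra.
From mathcomp Require Import all_classical all_reals all_analysis.
From mathcomp Require Import ring lra unstable.
Import Order.TTheory GRing.Theory Num.Theory.
Import numFieldNormedType.Exports.
Set Implicit Arguments. Unset Strict Implicit. Unset Printing Implicit Defensive.
Local Open Scope classical_set_scope.
Local Open Scope ring_scope.

(* Write H_j for the Hessian at x_j and G for G_k.  Entrywise, the difference
   gamma_{k+1} - gamma_k - ||X||^2 + 2 <X, G - B_k> falls short of
   (1-theta)/theta (G - H_k)^2 + (1+theta)/theta (G - H_{k+1})^2
   + 2 theta H_{k+1}^2 by an explicit sum of squares.  The L-Lipschitz gradient
   bounds every column of H_{k+1} by L, so ||H_{k+1}||_F^2 <= d L^2.  Since G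
   averages the Hessian along the segment [x_k, x_{k+1}], the M-Lipschitz
   Hessian gives ||G - H_j||_F <= sqrt d M ||s_k|| / 2 for j = k, k+1, and
   (1-theta)/theta + (1+theta)/theta = 2/theta yields d M^2 ||s_k||^2/(2 theta). *)

Section CauchySchwarz.
Variables (R : rcfType) (I : finType) (F G : I -> R).

Lemma lagrange_identity :
  ((\sum_i F i ^+ 2) * (\sum_i G i ^+ 2) - (\sum_i F i * G i) ^+ 2) *+ 2
  = \sum_i \sum_j (F i * G j - F j * G i) ^+ 2.
Proof.
have -> : \sum_i \sum_j (F i * G j - F j * G i) ^+ 2
    = \sum_i \sum_j F i ^+ 2 * G j ^+ 2 + \sum_i \sum_j F j ^+ 2 * G i ^+ 2
      - (\sum_i \sum_j (F i * G i) * (F j * G j)) *+ 2.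
  rewrite -sumrMnl -big_split -sumrB; apply: eq_bigr => i _.
  rewrite -sumrMnl -big_split -sumrB; apply: eq_bigr => j _ /=; ring.
rewrite [X in _ + X - _]exchange_big /=.
by rewrite expr2 !big_distrlr /= -mulr2n mulrnBl.
Qed.

Lemma cauchy_schwarz :
  (\sum_i F i * G i) ^+ 2 <= (\sum_i F i ^+ 2) * (\sum_i G i ^+ 2).
Proof.
rewrite -subr_ge0 -(pmulrn_lge0 _ (ltn0Sn 1)) lagrange_identity.
by do 2!(apply: sumr_ge0 => ? _); exact: sqr_ge0.
Qed.

Lemma cauchy_schwarz_sqrt :
  \sum_i F i * G i <= Num.sqrt (\sum_i F i ^+ 2) * Num.sqrt (\sum_i G i ^+ 2).
Proof.
rewrite -sqrtrM ?sumr_ge0 // => [|i _]; last exact: sqr_ge0.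
by rewrite (le_trans (ler_norm _)) // -sqrtr_sqr ler_wsqrtr // cauchy_schwarz.
Qed.

End CauchySchwarz.

Lemma gamma_step_scalar_le (R : realFieldType) (th b x h0 h1 g : R) :
    0 < th < 1 ->
  ((((1 - th) / (1 + th)) * (b + x) - h1) ^+ 2 - h1 ^+ 2
    + th / (1 - th) * (((1 - th) / (1 + th)) * (b + x)) ^+ 2)
  - ((b - h0) ^+ 2 - h0 ^+ 2 + th / (1 - th) * b ^+ 2)
  <= x ^+ 2 - 2 * (x * (g - b))
     + (1 - th) / th * (g - h0) ^+ 2 + (1 + th) / th * (g - h1) ^+ 2
     + 2 * th * h1 ^+ 2.
Proof.
move=> /andP[th0 th1].
set c := (1 - th) / (1 + th); set a := th / (1 - th).
set k := th * (3 + th) / (1 + th) ^+ 2; set e := 2 / (1 + th).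
have a0 : 0 < a by rewrite divr_gt0 // subr_gt0.
have k0 : 0 < k by rewrite divr_gt0 ?mulr_gt0 ?exprn_gt0 //; lra.
have e0 : 0 < e by rewrite divr_gt0 //; lra.
rewrite -subr_ge0.
have -> : x ^+ 2 - 2 * (x * (g - b))
     + (1 - th) / th * (g - h0) ^+ 2 + (1 + th) / th * (g - h1) ^+ 2
     + 2 * th * h1 ^+ 2
   - (((c * (b + x) - h1) ^+ 2 - h1 ^+ 2 + a * (c * (b + x)) ^+ 2)
      - ((b - h0) ^+ 2 - h0 ^+ 2 + a * b ^+ 2))
   = (a * b - (h0 - g)) ^+ 2 / a + (k * (b + x) - (g - c * h1)) ^+ 2 / k
     + (e * (g - h1) - (1 - c) * h1) ^+ 2 / (e * k).
  rewrite /a /k /e /c; field.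
  by rewrite !gt_eqF //; lra.
by rewrite !addr_ge0 // divr_ge0 ?sqr_ge0 ?ltW // mulr_gt0.
Qed.

Section Norms.
Variables (R : realType) (d : nat).
Implicit Types (v : 'cV[R]_d) (A B : 'M[R]_d).

Lemma enorm_ge0 v : 0 <= enorm v.
Proof. exact: sqrtr_ge0. Qed.

Lemma enorm_sqrE v : enorm v ^+ 2 = \sum_i v i 0 ^+ 2.
Proof. by rewrite sqr_sqrtr // sumr_ge0 // => i _; exact: sqr_ge0. Qed.

Lemma enorm0 : enorm (0 : 'cV[R]_d) = 0.
Proof. by rewrite /enorm big1 ?sqrtr0 // => i _; rewrite mxE expr0n. Qed.

Lemma enormZ (k : R) v : enorm (k *: v) = `|k| * enorm v.
Proof.
rewrite /enorm -sqrtr_sqr -sqrtrM ?sqr_ge0 // mulr_sumr.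
by congr Num.sqrt; apply: eq_bigr => i _; rewrite mxE exprMn.
Qed.

Lemma enorm_delta (j : 'I_d) : enorm (delta_mx j 0 : 'cV[R]_d) = 1.
Proof.
rewrite /enorm (bigD1 j) //= big1 ?addr0 ?mxE ?eqxx ?expr1n ?sqrtr1 //.
by move=> i /negbTE ij; rewrite mxE ij expr0n.
Qed.

Lemma enorm_continuous : continuous (@enorm R d).
Proof.
have sumsq : continuous (fun w : 'cV[R]_d => \sum_i w i 0 ^+ 2).
  apply: continuous_big => [|i _ w]; first exact: add_continuous.
  apply: (@continuous_comp _ _ _ (fun x : 'cV[R]_d => x i 0) (fun r : R => r ^+ 2)).
    exact: coord_continuous.
  exact: exprn_continuous.
move=> v; apply: (@continuous_comp _ _ _ _ (@Num.sqrt R)); first exact: sumsq.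
exact: sqrt_continuous.
Qed.

Lemma frob_ge0 A : 0 <= frob A.
Proof. exact: sqrtr_ge0. Qed.

Lemma frob_sqrE A : frob A ^+ 2 = \sum_i \sum_j A i j ^+ 2.
Proof.
by rewrite sqr_sqrtr // sumr_ge0 // => i _; rewrite sumr_ge0 // => j _; exact: sqr_ge0.
Qed.

Lemma frob_pairE A : frob A = Num.sqrt (\sum_(p : 'I_d * 'I_d) A p.1 p.2 ^+ 2).
Proof. by rewrite /frob pair_big. Qed.

Lemma frob_sqr_col A : frob A ^+ 2 = \sum_j enorm (col j A) ^+ 2.
Proof.
rewrite frob_sqrE exchange_big; apply: eq_bigr => j _.
by rewrite enorm_sqrE; apply: eq_bigr => i _; rewrite mxE.
Qed.

Lemma innerE A B : inner A B = \sum_i \sum_j A i j * B i j.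
Proof.
rewrite /inner /mxtrace exchange_big; apply: eq_bigr => i _.
by rewrite !mxE; apply: eq_bigr => j _; rewrite mxE.
Qed.

Lemma inner_le_frob A B : inner A B <= frob A * frob B.
Proof.
rewrite innerE pair_big !frob_pairE.
exact: (cauchy_schwarz_sqrt (fun p => A p.1 p.2) (fun p => B p.1 p.2)).
Qed.

Lemma enorm_mulmx_le A v : enorm (A *m v) <= frob A * enorm v.
Proof.
rewrite -(@ler_pXn2r _ 2) ?nnegrE ?mulr_ge0 ?enorm_ge0 ?frob_ge0 //.
rewrite exprMn frob_sqrE !enorm_sqrE mulr_suml; apply: ler_sum => i _.
by rewrite !mxE; exact: cauchy_schwarz.
Qed.

Lemma enorm_mulmx_le_opnorm A v : enorm v <= 1 -> enorm (A *m v) <= opnorm A.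
Proof.
move=> v1; apply: sup_upper_bound; last by exists v.
split; first by exists (enorm (A *m v)), v.
exists (frob A) => _ [w [w1 ->]].
by rewrite (le_trans (enorm_mulmx_le A w)) // ler_piMr ?frob_ge0.
Qed.

Lemma opnorm_ge0 A : 0 <= opnorm A.
Proof.
by rewrite -enorm0 -(mulmx0 _ A) enorm_mulmx_le_opnorm // enorm0.
Qed.

Lemma enorm_col_le_opnorm A j : enorm (col j A) <= opnorm A.
Proof. by rewrite colE enorm_mulmx_le_opnorm // enorm_delta. Qed.

Lemma normr_entry_le_opnorm A i j : `|A i j| <= opnorm A.
Proof.
apply: le_trans (enorm_col_le_opnorm A j); rewrite -sqrtr_sqr ler_wsqrtr //.
by rewrite (bigD1 i) //= mxE lerDl sumr_ge0 // => k _; exact: sqr_ge0.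
Qed.

Lemma frob_sqr_le_col A (c : R) :
  (forall j, enorm (col j A) <= c) -> frob A ^+ 2 <= d%:R * c ^+ 2.
Proof.
move=> Ac; rewrite frob_sqr_col mulr_natl -[X in _ *+ X](card_ord d) -sumr_const.
by apply: ler_sum => j _; rewrite !expr2 ler_pM ?enorm_ge0.
Qed.

Lemma frob_le_opnorm A : frob A <= Num.sqrt d%:R * opnorm A.
Proof.
rewrite -(@ler_pXn2r _ 2) ?nnegrE ?mulr_ge0 ?frob_ge0 ?opnorm_ge0 //.
rewrite exprMn (sqr_sqrtr (ler0n _ d)); apply: frob_sqr_le_col => j.
exact: enorm_col_le_opnorm.
Qed.

End Norms.

Section Hessian.
Variables (R : realType) (d : nat).

Lemma enorm_diff_le (g : 'cV[R]_d -> 'cV[R]_d) (L : R) (x v : 'cV[R]_d) :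
  differentiable g x -> (forall y z, enorm (g y - g z) <= L * enorm (y - z)) ->
  enorm ('d g x v) <= L * enorm v.
Proof.
move=> dg gL; rewrite -deriveE //.
have Dg := @diff_derivable _ _ _ g x v dg.
apply: (cvgr_to_le (continuous_cvg _ (@enorm_continuous R d _) Dg)).
near=> h; have h0 : h != 0 by near: h; exact: nbhs_dnbhs_neq.
rewrite /= enormZ normfV ler_pdivrMl ?normr_gt0 // mulrCA -enormZ.
by have := gL (h *: v + x) x; rewrite addrK.
Unshelve. all: by end_near.
Qed.

Lemma col_hess (f : 'cV[R]_d -> R) x j :
  col j (hess f x) = 'd (grad f) x (delta_mx j 0 : 'cV[R]_d).
Proof. by apply/matrixP => i k; rewrite !mxE [k]ord1. Qed.

Lemma frob_hess_sqr_le (f : 'cV[R]_d -> R) (L : R) x :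
  differentiable (grad f) x ->
  (forall y z, enorm (grad f y - grad f z) <= L * enorm (y - z)) ->
  frob (hess f x) ^+ 2 <= d%:R * L ^+ 2.
Proof.
move=> df fL; apply: frob_sqr_le_col => j.
by rewrite col_hess -[L]mulr1 -(enorm_delta R j) enorm_diff_le.
Qed.

End Hessian.

Lemma Rintegral_sum (dT : measure_display) (T : measurableType dT) (R : realType)
    (mu : {measure set T -> \bar R}) (D : set T) (I : Type) (r : seq I)
    (F : I -> T -> R) :
  measurable D -> (forall i, mu.-integrable D (EFin \o F i)) ->
  \int[mu]_(x in D) (\sum_(i <- r) F i x) = \sum_(i <- r) \int[mu]_(x in D) F i x.
Proof.
move=> mD iF.
suff [] : mu.-integrable D (EFin \o fun x => \sum_(i <- r) F i x)
  /\ \int[mu]_(x in D) (\sum_(i <- r) F i x) = \sum_(i <- r) \int[mu]_(x in D) F i x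
  by [].
elim: r => [|i r [ir IHr]].
  under eq_Rintegral do rewrite big_nil.
  rewrite big_nil Rintegral_cst // mul0r; split=> //.
  by apply: eq_integrable (integrable0 mu D) => // x _; rewrite /= big_nil.
under eq_Rintegral do rewrite big_cons.
rewrite big_cons RintegralD // IHr; split=> //.
by apply: eq_integrable (integrableD _ (iF i) ir) => // x _; rewrite /= big_cons.
Qed.

Section UnitInterval.
Variable R : realType.
Local Notation mu := (@lebesgue_measure R).

Lemma lipschitz_continuous (phi : R -> R) (K : R) :
  (forall u t, `|phi u - phi t| <= K * `|u - t|) -> continuous phi.
Proof.
move=> phiK t; apply/cvgrPdist_lt => e e0.
have K1 : 0 < `|K| + 1 by rewrite ltr_pwDr.
near=> u; apply: le_lt_trans (phiK t u) _.
apply: le_lt_trans (_ : _ <= (`|K| + 1) * `|t - u|) _.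
  by rewrite ler_wpM2r // (le_trans (ler_norm K)) // lerDl.
rewrite mulrC -ltr_pdivlMr //; near: u.
have /cvgr_dist_lt : (fun u : R => u) @ t --> t := cvg_id.
by apply; rewrite divr_gt0.
Unshelve. all: by end_near.
Qed.

Lemma continuous_integrable01 (phi : R -> R) :
  continuous phi -> mu.-integrable `[0, 1] (EFin \o phi).
Proof.
move=> c; apply: continuous_compact_integrable; first exact: segment_compact.
exact: continuous_subspaceT.
Qed.

Lemma Rintegral01_cst (c : R) : \int[mu]_(t in `[0, 1]) c = c.
Proof.
rewrite Rintegral_cst //.
transitivity (c * fine (1%:E : \bar R)); last by rewrite mulr1.
congr (_ * fine _).
by apply: etrans (lebesgue_measure_itv _) _; rewrite /= lte_fin ltr01 oppr0 adde0.
Qed.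

Lemma Rintegral01_id : \int[mu]_(t in `[0, 1]) t = 2^-1.
Proof.
rewrite Rintegration_by_substitution_onem ?ler01 ?lexx ?onem1 //; last first.
  by apply: continuous_subspaceT => t; exact: cvg_id.
by under eq_Rintegral do rewrite -[_.~]expr1; exact: (Rintegral_onemXn 1).
Qed.

End UnitInterval.

Section MatrixIntegral.
Variables (R : realType) (d : nat).
Local Notation mu := (@lebesgue_measure R).

Lemma frob_Rintegral01_sub_le (h : R -> 'M[R]_d) (H : 'M[R]_d) (w : R -> R) :
  (forall i j, continuous (fun t => h t i j)) -> continuous w ->
  (forall t, 0 <= t <= 1 -> frob (h t - H) <= w t) ->
  frob ((\matrix_(i, j) \int[mu]_(t in `[0, 1]) h t i j) - H)
    <= \int[mu]_(t in `[0, 1]) w t.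
Proof.
(* ||C||_F^2 = int <C, h t - H> dt <= ||C||_F int w, by Cauchy-Schwarz. *)
move=> ch cw hw; set C := _ - H.
pose g (p : 'I_d * 'I_d) t := C p.1 p.2 * (h t p.1 p.2 - H p.1 p.2).
have chH i j : continuous (fun t => h t i j - H i j).
  by move=> t; apply: cvgB; [exact: (ch i j t) | exact: cvg_cst].
have cg p : continuous (g p) by move=> t; apply: cvgM; [exact: cvg_cst | exact: chH].
have frobC : frob C ^+ 2 = \int[mu]_(t in `[0, 1]) \sum_p g p t.
  rewrite Rintegral_sum // => [|p]; last exact: continuous_integrable01.
  rewrite frob_sqrE pair_big; apply: eq_bigr => p _.
  rewrite RintegralZl ?continuous_integrable01 //.
  rewrite RintegralB ?Rintegral01_cst ?continuous_integrable01 //;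
    last exact: cst_continuous.
  by rewrite expr2 {2}/C !mxE.
have le_int : frob C ^+ 2 <= frob C * \int[mu]_(t in `[0, 1]) w t.
  rewrite frobC -RintegralZl ?continuous_integrable01 //.
  apply: le_Rintegral => //.
  - apply: continuous_integrable01; apply: continuous_big => //.
    exact: add_continuous.
  - apply: continuous_integrable01 => t.
    by apply: cvgM; [exact: cvg_cst | exact: cw].
  move=> t; rewrite /= in_itv /= => t01.
  have -> : \sum_p g p t = inner C (h t - H).
    rewrite innerE pair_big; apply: eq_bigr => p _.
    by rewrite /g [(h t - H) _ _]mxE [(- H) _ _]mxE.
  exact: le_trans (inner_le_frob _ _) (ler_wpM2l (frob_ge0 C) (hw t t01)).
have w_ge0 : 0 <= \int[mu]_(t in `[0, 1]) w t.
  apply: Rintegral_ge0 => // t; rewrite /= in_itv /= => t01.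
  exact: le_trans (frob_ge0 _) (hw t t01).
move: (frob_ge0 C) le_int w_ge0.
by move: (frob C) (\int[mu]_(t in `[0, 1]) w t) => u I; nra.
Qed.

End MatrixIntegral.

Section SecantHessian.
Variables (R : realType) (d : nat) (f : 'cV[R]_d -> R) (M : R).
Hypothesis hess_lip : forall x y, opnorm (hess f x - hess f y) <= M * enorm (x - y).

Lemma frob_hess_sub_le x y :
  frob (hess f x - hess f y) <= Num.sqrt d%:R * M * enorm (x - y).
Proof.
by rewrite -mulrA (le_trans (frob_le_opnorm _)) // ler_wpM2l ?sqrtr_ge0.
Qed.

Lemma hess_segment_continuous x s i j :
  continuous (fun t : R => hess f (x + t *: s) i j).
Proof.
apply: (@lipschitz_continuous _ _ (M * enorm s)) => u t.
have := normr_entry_le_opnorm (hess f (x + u *: s) - hess f (x + t *: s)) i j.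
rewrite [X in `|X|]mxE [X in `|_ + X|]mxE => /le_trans -> //.
rewrite (le_trans (hess_lip _ _)) //.
by rewrite opprD addrACA subrr add0r -scalerBl enormZ mulrCA mulrC.
Qed.

Lemma frob_Gk_sub_hess_le x s :
  frob (Gk f x s - hess f x) <= Num.sqrt d%:R * M * enorm s / 2.
Proof.
set c := Num.sqrt d%:R * M * enorm s.
apply: le_trans (frob_Rintegral01_sub_le (w := fun t => c * t)
  (@hess_segment_continuous x s) _ _) _.
- by move=> t; apply: cvgM; [exact: cvg_cst | exact: cvg_id].
- move=> t /andP[t0 _]; rewrite (le_trans (frob_hess_sub_le _ _)) //.
  by rewrite addrAC subrr add0r enormZ ger0_norm // mulrCA mulrC.
rewrite RintegralZl ?Rintegral01_id //.
by apply: continuous_integrable01 => t; exact: cvg_id.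
Qed.

Lemma frob_Gk_sub_hess_add_le x s :
  frob (Gk f x s - hess f (x + s)) <= Num.sqrt d%:R * M * enorm s / 2.
Proof.
set c := Num.sqrt d%:R * M * enorm s.
have onem_continuous : continuous (@onem R).
  by move=> t; apply: cvgB; [exact: cvg_cst | exact: cvg_id].
apply: le_trans (frob_Rintegral01_sub_le (w := fun t => c * t.~)
  (@hess_segment_continuous x s) _ _) _.
- by move=> t; apply: cvgM; [exact: cvg_cst | exact: onem_continuous].
- move=> t /andP[_ t1]; rewrite (le_trans (frob_hess_sub_le _ _)) //.
  rewrite opprD addrACA subrr add0r -{2}[s]scale1r -scalerBl enormZ.
  by rewrite -normrN opprB ger0_norm ?subr_ge0 // mulrCA mulrC.
rewrite RintegralZl ?continuous_integrable01 //.
by under eq_Rintegral do rewrite -[_.~]expr1; rewrite (Rintegral_onemXn 1).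
Qed.

End SecantHessian.

Section GammaStep.
Variables (R : realType) (d : nat).
Implicit Types (H B : 'M[R]_d).

(* [gamma f theta x B] unfolds to [gamma_mx theta (hess f x) B]. *)
Definition gamma_mx (theta : R) H B : R :=
  frob (B - H) ^+ 2 - frob H ^+ 2 + theta / (1 - theta) * frob B ^+ 2.

Lemma gamma_mx_step_le (theta : R) (Bk X H0 H1 G : 'M[R]_d) : 0 < theta < 1 ->
  gamma_mx theta H1 (((1 - theta) / (1 + theta)) *: (Bk + X)) - gamma_mx theta H0 Bk
  <= frob X ^+ 2 - 2 * inner X (G - Bk)
     + (1 - theta) / theta * frob (G - H0) ^+ 2
     + (1 + theta) / theta * frob (G - H1) ^+ 2 + 2 * theta * frob H1 ^+ 2.
Proof.
move=> theta01; rewrite /gamma_mx !frob_sqrE innerE !mulr_sumr.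
rewrite -!(sumrB, big_split); apply: ler_sum => i _.
rewrite !mulr_sumr -!(sumrB, big_split); apply: ler_sum => j _.
by rewrite !mxE; exact: gamma_step_scalar_le.
Qed.

End GammaStep.

Theorem lemma3p2 (R : realType) (d : nat) (f : 'cV[R]_d -> R) (L M : R)
  (hdf : forall x, differentiable f x)
  (hd2f : forall x, differentiable (grad f) x)
  (hinf : exists c : R, forall x, c <= f x)
  (hL : 0 < L) (hM : 0 < M)
  (hLip : forall x y, enorm (grad f x - grad f y) <= L * enorm (x - y))
  (hHess : forall x y, opnorm (hess f x - hess f y) <= M * enorm (x - y))
  (xk sk : 'cV[R]_d) (theta : R) (htheta : 0 < theta < 1)
  (Bk X : 'M[R]_d) (hBk : Bk^T = Bk) (hX : X^T = X) :
  let xk1 := xk + sk in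
  let Bk1 := ((1 - theta) / (1 + theta)) *: (Bk + X) in
  gamma f theta xk1 Bk1 - gamma f theta xk Bk
    <= 2 * d%:R * L ^+ 2 * theta
       + d%:R * M ^+ 2 / (2 * theta) * enorm sk ^+ 2
       + frob X ^+ 2 - 2 * inner X (Gk f xk sk - Bk).
Proof.
(* Only the two Lipschitz bounds, the differentiability of grad f and
   0 < theta < 1 are used; the other hypotheses are standing assumptions of
   the paper. *)
cbv zeta; have /andP[theta0 theta1] := htheta.
have c0 : 0 <= (1 - theta) / theta by rewrite divr_ge0 //; lra.
have c1 : 0 <= (1 + theta) / theta by rewrite divr_ge0 //; lra.
have c2 : 0 <= 2 * theta by lra.
set K := Num.sqrt d%:R * M * enorm sk / 2.
have sqr_le_K (A : 'M[R]_d) : frob A <= K -> frob A ^+ 2 <= K ^+ 2.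
  by move=> AK; rewrite ler_pXn2r ?nnegrE ?frob_ge0 // (le_trans (frob_ge0 A)).
have KM : (1 - theta) / theta * K ^+ 2 + (1 + theta) / theta * K ^+ 2
          = d%:R * M ^+ 2 / (2 * theta) * enorm sk ^+ 2.
  by rewrite /K !exprMn sqr_sqrtr //; field; rewrite gt_eqF.
have -> : 2 * d%:R * L ^+ 2 * theta = 2 * theta * (d%:R * L ^+ 2) by ring.
apply: le_trans (gamma_mx_step_le Bk X _ _ (Gk f xk sk) htheta) _.
rewrite -2![in leLHS]addrA -[leRHS]addrA [leRHS]addrC lerD2l addrA.
rewrite [leRHS]addrC -KM.
apply: lerD; first apply: lerD.
- by apply: (ler_wpM2l c0); apply: sqr_le_K; exact: frob_Gk_sub_hess_le.
- by apply: (ler_wpM2l c1); apply: sqr_le_K; exact: frob_Gk_sub_hess_add_le.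
- by apply: (ler_wpM2l c2); exact: frob_hess_sqr_le.
Qed.
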